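(* For any Loomis-Whitney query $Q$, $\mathsf{w}(\widehat Q)=\frac32$, where $\widehat Q$ is the multivariate extension of $Q$.
   Context: A Loomis-Whitney query of degree $k\ge3$ has variables $X_1,\dots,X_k$ and $k$ atoms $R_1,\dots,R_k$, where the schema of $R_i$ consists of all variables except $X_i$ (e.g., the triangle query $R(A,B)\wedge S(B,C)\wedge T(A,C)$ for $k=3$). Multivariate extension of $Q=R_1(\mathbf X_1)\wedge\cdots\wedge R_k(\mathbf X_k)$: take fresh variables $Z_1,\dots,Z_k$. For a permutation $\sigma$ of $[k]$, the component $\widehat Q_\sigma$ replaces each atom $R_{\sigma_i}(\mathbf X_{\sigma_i})$ by $\widehat R_{\sigma_i}(Z_1,\dots,Z_i,\mathbf X_{\sigma_i})$; $\widehat Q$ is the union of all components. Fractional hypertree width $\mathsf{w}(P)$ of a query $P$: minimum over tree decompositions of $P$ (trees with bags of variables covering every atom schema, the bags containing any variable forming a connected subtree) of the maximum over bags $B$ of the fractional edge cover number of $P$ restricted to $B$ (each atom schema intersected with $B$). For a union of queries, $\mathsf{w}$ is the maximum over the queries. *)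

From mathcomp Require Import all_boot all_order all_algebra.
From mathcomp Require Import perm.
From mathcomp Require Import boolp classical_sets reals.
Set Implicit Arguments. Unset Strict Implicit. Unset Printing Implicit Defensive.
Import Order.TTheory GRing.Theory Num.Theory.
Local Open Scope ring_scope.

(* A (conjunctive) query over the variable type V is represented by the list
   of its atom schemas (the relation names play no role for the width). *)

(* Trees: a nonempty connected simple graph with |N| - 1 edges.
   [set p | e p.1 p.2] counts every undirected edge twice. *)
Definition is_tree (N : finType) (e : rel N) : Prop :=
  [/\ (0 < #|N|)%N, symmetric e, irreflexive e,
      (forall x y, connect e x y) &
      #|[set p : N * N | e p.1 p.2]| = (2 * (#|N| - 1))%N].

Definition is_tree_decomposition (V : finType) (A : seq {set V})
    (N : finType) (e : rel N) (bag : N -> {set V}) : Prop :=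
  [/\ is_tree e,
      (forall a, a \in A -> exists t, a \subset bag t) &
      (forall v t1 t2, v \in bag t1 -> v \in bag t2 ->
         connect (fun a b => [&& e a b, v \in bag a & v \in bag b]) t1 t2)].

Definition fec_number (R : realType) (V : finType) (A : seq {set V})
    (B : {set V}) : R :=
  inf (fun s : R => exists u : 'I_(size A) -> R,
        [/\ (forall j, 0 <= u j),
            (forall x, (exists j : 'I_(size A), x \in nth finset.set0 A j :&: B) ->
               1 <= \sum_(j < size A | x \in nth finset.set0 A j :&: B) u j) &
            s = \sum_(j < size A) u j]).

Definition td_width (R : realType) (V : finType) (A : seq {set V})
    (N : finType) (bag : N -> {set V}) : R :=
  \big[Num.max/0]_(t : N) fec_number R A (bag t).

Definition fhw (R : realType) (V : finType) (A : seq {set V}) : R :=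
  inf (fun r : R => exists (N : finType) (e : rel N) (bag : N -> {set V}),
        is_tree_decomposition A e bag /\ r = td_width R A bag).

Definition loomis_whitney (k : nat) : seq {set 'I_k} :=
  [seq [set j | j != i] | i <- enum 'I_k].

(* Component sigma of the multivariate extension of a query with atom list A
   (k = size A atoms) over fresh variables Z_1..Z_k (encoded as inr j, j<k):
   the i-th atom (0-indexed) is hat R_{sigma i}(Z_1..Z_{i+1}, X_{sigma i}). *)
Definition mv_component (V : finType) (A : seq {set V}) (s : 'S_(size A))
    : seq {set (V + 'I_(size A))} :=
  [seq [set inr j | j : 'I_(size A) & (j <= i)%N] :|: inl @: nth finset.set0 A (s i)
     | i : 'I_(size A) <- enum 'I_(size A)].

(* Fractional hypertree width of the multivariate extension (a union of
   queries): maximum over its components. *)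
Definition fhw_mv_extension (R : realType) (V : finType) (A : seq {set V}) : R :=
  \big[Num.max/0]_(s : 'S_(size A)) fhw R (@mv_component _ A s).

(* Every component has width 3/2.  Upper bound: the bags "all variables but
   Z_k" and "all variables but X_{s_k}", joined by an edge, form a tree
   decomposition.  Every atom but the last lies in the first bag, whose
   variables each lie in two of the atoms 1, k-1, k, so weight 1/2 on these
   three atoms covers it; the last atom alone covers the second bag.
   Lower bound: Z_{k-1}, X_{s_{k-1}} and X_{s_k} pairwise share an atom, so by
   the Helly property of subtrees of a tree some bag contains all three.
   Covering Z_{k-1}, which occurs only in atoms k-1 and k, needs
   u_{k-1} + u_k >= 1, and covering X_{s_i} (i = k-1, k), which is missing
   only from atom i, needs total - u_i >= 1; adding up, total >= 3/2. *)

From mathcomp Require Import boolp classical_sets reals.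
(* Imported after classical_sets, so that the finset names shadow its own. *)
From mathcomp Require Import all_boot all_order all_algebra perm.
From mathcomp Require Import zify lra.
Import Order.TTheory GRing.Theory Num.Theory.
Set Implicit Arguments. Unset Strict Implicit. Unset Printing Implicit Defensive.

Lemma connect_homo (T T' : finType) (r : rel T) (r' : rel T') (f : T -> T') :
  (forall a b, r a b -> connect r' (f a) (f b)) ->
  forall x y, connect r x y -> connect r' (f x) (f y).
Proof.
move=> hom x y /connectP [p + ->]; elim: p x => [|z p IHp] x /=.
  by rewrite connect0.
by case/andP=> /hom xz /IHp; apply: connect_trans.
Qed.

Section SubtreeHelly.
Variables (N : finType) (e : rel N).
Hypotheses (e_sym : symmetric e) (e_irr : irreflexive e).

Definition induced (S : {set N}) : rel N := fun a b => [&& e a b, a \in S & b \in S].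
Definition connected_in (S : {set N}) := {in S &, forall a b, connect (induced S) a b}.
Definition edges_in (U : {set N}) := [set p : N * N | induced U p.1 p.2].
Definition degree_in (U : {set N}) x := #|[set y in U | e x y]|.
Definition tree_on (U : {set N}) :=
  [/\ (0 < #|U|)%N, connected_in U & #|edges_in U| = (2 * (#|U| - 1))%N].
Definition leaf_of (U : {set N}) l m :=
  [/\ l \in U, m \in U, e l m & {in U, forall y, e l y -> y = m}].

Lemma card_edges_in U : #|edges_in U| = (\sum_(x in U) degree_in U x)%N.
Proof.
rewrite -sum1_card (eq_bigr (fun x => \sum_(y in [set y in U | e x y]) 1)%N).
  rewrite pair_big_dep /=; apply: eq_bigl => -[a b] /=.
  by rewrite !inE /induced /=; case: (a \in U); case: (b \in U); case: (e a b).
by move=> x _; rewrite sum1_card.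
Qed.

(* Degrees sum to 2 (#|U| - 1) < 2 #|U|, so some vertex has degree at most 1,
   and connectivity excludes degree 0 once #|U| > 1. *)
Lemma tree_on_leaf U : tree_on U -> (1 < #|U|)%N -> exists l m, leaf_of U l m.
Proof.
case=> _ U_conn U_edges U_gt1.
have [l lU deg_l] : exists2 l, l \in U & (degree_in U l < 2)%N.
  apply/exists_inP; apply: contraT; rewrite negb_exists_in => /forall_inP deg_ge2.
  have : (\sum_(x in U) 2 <= \sum_(x in U) degree_in U x)%N.
    by apply: leq_sum => x /deg_ge2; rewrite -leqNgt.
  by rewrite -card_edges_in U_edges sum_nat_const; lia.
have [y yU yl] : exists2 y, y \in U & y != l.
  have [a [b [aU bU ab]]] := card_gt1P U_gt1.
  by case: (eqVneq a l) => [al|]; [exists b; rewrite // -al eq_sym | exists a].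
have : (0 < degree_in U l)%N.
  case/connectP: (U_conn l y lU yU) => -[|z p] /=.
    by move=> _ yl'; rewrite yl' eqxx in yl.
  case/andP=> /and3P [elz _ zU] _ _.
  by apply/card_gt0P; exists z; rewrite !inE zU elz.
move=> deg_l_gt0; have /cards1P [m nbr_l] : degree_in U l == 1%N by lia.
have : m \in [set y in U | e l y] by rewrite nbr_l set11.
rewrite inE => /andP [mU elm]; exists l, m; split=> // z zU elz.
have : z \in [set y in U | e l y] by rewrite inE zU elz.
by rewrite nbr_l inE => /eqP.
Qed.

Section DeleteLeaf.
Variables (U : {set N}) (l m : N).
Hypothesis lm_leaf : leaf_of U l m.

Lemma leaf_neq : l != m.
Proof. by case: lm_leaf => _ _ elm _; apply: contraTneq elm => ->; rewrite e_irr. Qed.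

Definition contract_leaf y := if y == l then m else y.

Lemma connect_contract_leaf (S : {set N}) : S \subset U -> forall x y,
  connect (induced S) x y ->
  connect (induced (S :\ l)) (contract_leaf x) (contract_leaf y).
Proof.
case: lm_leaf => _ _ _ l_nbr /subsetP SU; apply: connect_homo => a b /and3P [eab aS bS].
rewrite /contract_leaf; case: (eqVneq a l) => [al | al].
  by rewrite -(l_nbr b (SU b bS)) -?al // if_same connect0.
case: (eqVneq b l) => [bl | bl].
  by rewrite (l_nbr a (SU a aS)) ?connect0 // -bl e_sym.
by apply: connect1; rewrite /induced !inE eab al bl aS bS.
Qed.

Lemma connected_in_delete_leaf (S : {set N}) :
  S \subset U -> connected_in S -> connected_in (S :\ l).
Proof.
move=> SU S_conn a b; rewrite !inE => /andP [al aS] /andP [bl bS].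
have := connect_contract_leaf SU (S_conn a b aS bS).
by rewrite /contract_leaf (negbTE al) (negbTE bl).
Qed.

Lemma leaf_neighbour_mem (S : {set N}) a :
  S \subset U -> connect (induced S) l a -> a != l -> m \in S.
Proof.
case: lm_leaf => _ _ _ l_nbr /subsetP SU /connectP [[|z p] /=].
  by move=> _ ->; rewrite eqxx.
by case/andP=> /and3P [elz _ zS] _ _ _; rewrite -(l_nbr z (SU z zS) elz).
Qed.

Lemma card_edges_in_delete_leaf : #|edges_in U| = (#|edges_in (U :\ l)| + 2)%N.
Proof.
have lm := leaf_neq; case: lm_leaf => lU mU elm l_nbr.
rewrite (cardsD1 (l, m)) (cardsD1 (m, l) (edges_in U :\ (l, m))).
have -> : edges_in U :\ (l, m) :\ (m, l) = edges_in (U :\ l).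
  apply/setP => -[a b]; rewrite !inE /induced /= !inE !xpair_eqE.
  case: (eqVneq a l) => [-> | al] /=.
    rewrite andbF; apply/negbTE/negP => /and5P [_ bm elb _ bU].
    by rewrite (l_nbr b bU elb) eqxx in bm.
  case: (eqVneq b l) => [-> | bl] /=; last by rewrite andbF.
  rewrite andbT !andbF; apply/negbTE/negP => /and4P [am eal aU _].
  by rewrite e_sym in eal; rewrite (l_nbr a aU eal) eqxx in am.
rewrite !inE /induced /= !xpair_eqE elm lU mU (e_sym m l) elm eq_sym (negbTE lm) /=.
by lia.
Qed.

Lemma tree_on_delete_leaf : tree_on U -> (1 < #|U|)%N -> tree_on (U :\ l).
Proof.
case=> _ U_conn U_edges U_gt1; have := cardsD1 l U; case: lm_leaf => lU _ _ _.
rewrite lU => U_card; split.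
- by lia.
- exact: connected_in_delete_leaf (subxx U) U_conn.
- by have := card_edges_in_delete_leaf; lia.
Qed.

(* If [S1] and [S2] meet only at the leaf [l], then [S3] misses [l]; the paths
   inside [S1] and [S2] from [l] to their meeting points with [S3] both leave
   [l] through [m], so [m] is another common point. *)
Lemma meet_delete_leaf (S1 S2 S3 : {set N}) :
  S1 \subset U -> S2 \subset U -> connected_in S1 -> connected_in S2 ->
  ~~ [disjoint S1 & S2] -> ~~ [disjoint S1 & S3] -> ~~ [disjoint S2 & S3] ->
  l \notin S1 :&: S2 :&: S3 -> ~~ [disjoint S1 :\ l & S2 :\ l].
Proof.
rewrite -!setI_eq0 => S1U S2U S1_conn S2_conn.
move=> /set0Pn [t t12] /set0Pn [t1 t13] /set0Pn [t2 t23] l_out.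
apply/set0Pn; case: (eqVneq t l) => [tl | tl]; last by exists t; move: t12; rewrite !inE tl.
move: t12 t13 t23 l_out; rewrite tl !inE.
move=> /andP [lS1 lS2] /andP [t1S1 t1S3] /andP [t2S2 t2S3].
rewrite lS1 lS2 /= => lS3.
have t1l : t1 != l by apply: contraNneq lS3 => <-.
have t2l : t2 != l by apply: contraNneq lS3 => <-.
exists m; rewrite !inE eq_sym leaf_neq.
rewrite (leaf_neighbour_mem S1U (S1_conn _ _ lS1 t1S1) t1l).
by rewrite (leaf_neighbour_mem S2U (S2_conn _ _ lS2 t2S2) t2l).
Qed.

End DeleteLeaf.

Lemma subtree_helly3 U (S1 S2 S3 : {set N}) : tree_on U ->
  S1 \subset U -> S2 \subset U -> S3 \subset U ->
  connected_in S1 -> connected_in S2 -> connected_in S3 ->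
  ~~ [disjoint S1 & S2] -> ~~ [disjoint S1 & S3] -> ~~ [disjoint S2 & S3] ->
  ~~ [disjoint S1 :&: S2 & S3].
Proof.
have [n] := ubnP #|U|; elim: n U S1 S2 S3 => // n IHn U S1 S2 S3 U_lt U_tree.
move=> S1U S2U S3U S1_conn S2_conn S3_conn d12 d13 d23.
have [U_le1 | U_gt1] := leqP #|U| 1.
  move: d12 d13; rewrite -!setI_eq0 => /set0Pn [t t12] /set0Pn [t' t13].
  have t'_t : t' = t.
    move: t12 t13; rewrite !inE => /andP [tS1 _] /andP [t'S1 _].
    by apply: (card_le1_eqP U_le1); apply: (subsetP S1U).
  by apply/set0Pn; exists t; move: t12 t13; rewrite t'_t !inE => /andP [-> ->] /andP [_ ->].
have [l [m lm]] := tree_on_leaf U_tree U_gt1.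
have [l_in | l_out] := boolP (l \in S1 :&: S2 :&: S3).
  by rewrite -setI_eq0; apply/set0Pn; exists l.
have U'_lt : (#|U :\ l| < n)%N.
  by case: lm => lU _ _ _; have := cardsD1 l U; rewrite lU; lia.
have sym (A B : {set N}) : ~~ [disjoint A & B] -> ~~ [disjoint B & A].
  by rewrite disjoint_sym.
have d12' := meet_delete_leaf lm S1U S2U S1_conn S2_conn d12 d13 d23 l_out.
have d13' : ~~ [disjoint S1 :\ l & S3 :\ l].
  have := meet_delete_leaf lm S1U S3U S1_conn S3_conn d13 d12 (sym _ _ d23).
  by rewrite setIAC; apply.
have d23' : ~~ [disjoint S2 :\ l & S3 :\ l].
  have := meet_delete_leaf lm S2U S3U S2_conn S3_conn d23 (sym _ _ d12) (sym _ _ d13).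
  by rewrite setIC setIA; apply.
have := IHn _ _ _ _ U'_lt (tree_on_delete_leaf lm U_tree U_gt1)
  (setSD _ S1U) (setSD _ S2U) (setSD _ S3U)
  (connected_in_delete_leaf lm S1U S1_conn) (connected_in_delete_leaf lm S2U S2_conn)
  (connected_in_delete_leaf lm S3U S3_conn) d12' d13' d23'.
by apply: contra; apply: disjointW; rewrite ?setISS ?subD1set.
Qed.

End SubtreeHelly.

Lemma tree_decomposition_helly3 (V : finType) (A : seq {set V}) (N : finType)
    (e : rel N) (bag : N -> {set V}) (x y z : V) :
  is_tree_decomposition A e bag ->
  (exists2 a, a \in A & [set x; y] \subset a) ->
  (exists2 a, a \in A & [set x; z] \subset a) ->
  (exists2 a, a \in A & [set y; z] \subset a) ->
  exists t, [set x; y; z] \subset bag t.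
Proof.
case=> -[N_gt0 e_sym e_irr e_conn e_card] covers running.
pose occ v := [set t | v \in bag t].
have occ_conn v : connected_in e (occ v).
  move=> a b; rewrite !inE => va vb; apply: etrans (running v a b va vb).
  by apply: eq_connect => c d; rewrite /induced !inE.
have N_tree : tree_on e [set: N].
  split; rewrite ?cardsT //.
    move=> a b _ _; rewrite (@eq_connect _ _ e) // => c d.
    by rewrite /induced !inE !andbT.
  by rewrite -e_card; apply: eq_card => p; rewrite !inE /induced !inE !andbT.
have meet v w : (exists2 a, a \in A & [set v; w] \subset a) -> ~~ [disjoint occ v & occ w].
  case=> a aA vw_a; have [t a_t] := covers a aA.
  have /subsetP vw_t := subset_trans vw_a a_t.
  rewrite -setI_eq0; apply/set0Pn; exists t.
  by rewrite !inE !vw_t // !inE eqxx ?orbT.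
move=> /meet xy /meet xz /meet yz.
have := subtree_helly3 e_sym e_irr N_tree (subsetT _) (subsetT _) (subsetT _)
  (occ_conn x) (occ_conn y) (occ_conn z) xy xz yz.
rewrite -setI_eq0 => /set0Pn [t]; rewrite !inE => /andP [/andP [xt yt] zt].
by exists t; rewrite !subUset !sub1set xt yt zt.
Qed.

Local Open Scope ring_scope.
Section NonnegativeSums.
Variables (R : realDomainType) (I : finType) (u : I -> R).
Hypothesis u_ge0 : forall i, 0 <= u i.

Lemma ler_sum_subpred (P P' : pred I) :
  subpred P P' -> \sum_(i | P i) u i <= \sum_(i | P' i) u i.
Proof.
move=> PP'; rewrite [leLHS]big_mkcond [leRHS]big_mkcond /=.
apply: ler_sum => i _; case: (boolP (P i)) => [/PP' -> // | _].
by case: (P' i).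
Qed.

Lemma ler_sum_term (P : pred I) i0 : P i0 -> u i0 <= \sum_(i | P i) u i.
Proof. by move=> Pi0; rewrite (bigD1 i0) //= lerDl sumr_ge0. Qed.

Lemma ler_sum_terms2 (P : pred I) i1 i2 : i1 != i2 -> P i1 -> P i2 ->
  u i1 + u i2 <= \sum_(i | P i) u i.
Proof.
move=> i12 Pi1 Pi2; rewrite (bigD1 i1) //= (bigD1 i2) /= ?Pi2 1?eq_sym ?i12 //.
by rewrite addrA lerDl sumr_ge0.
Qed.

End NonnegativeSums.

Lemma big_pred2 (R : nmodType) (I : finType) (i1 i2 : I) (u : I -> R) : i1 != i2 ->
  \sum_(i | (i == i1) || (i == i2)) u i = u i1 + u i2.
Proof.
move=> i12; rewrite (bigD1 i1) ?eqxx //= (big_pred1 i2) // => i /=.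
by case: (eqVneq i i1) => [-> | _]; rewrite ?(negbTE i12) ?andbT.
Qed.

Section FractionalEdgeCover.
Variables (R : realType) (W : finType) (Q : seq {set W}) (B : {set W}).
Local Notation restricted j := (nth set0 Q j :&: B).

Definition fractional_edge_cover (u : 'I_(size Q) -> R) : Prop :=
  (forall j, 0 <= u j) /\
  (forall x, (exists j : 'I_(size Q), x \in restricted j) ->
     1 <= \sum_(j < size Q | x \in restricted j) u j).

Lemma fec_number_le u : fractional_edge_cover u -> fec_number R Q B <= \sum_j u j.
Proof.
case=> u_ge0 u_cov; apply: ge_inf; last by exists u.
by exists 0 => r [v [v_ge0 _ ->]]; apply: sumr_ge0.
Qed.

Lemma fec_number_ge (r : R) :
  (forall u, fractional_edge_cover u -> r <= \sum_j u j) -> r <= fec_number R Q B.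
Proof.
move=> r_lb; apply: lb_le_inf => [|_ [u [u_ge0 u_cov ->]]]; last exact: r_lb.
exists (\sum_(j < size Q) 1), (fun=> 1); split=> // x [j xj].
exact: (@ler_sum_term R _ (fun=> 1) (fun=> ler01) _ j xj).
Qed.

Lemma cover_constraint u x (j0 : 'I_(size Q)) (P : pred 'I_(size Q)) :
  fractional_edge_cover u ->
  x \in restricted j0 -> subpred (fun j : 'I_(size Q) => x \in restricted j) P ->
  1 <= \sum_(j | P j) u j.
Proof.
case=> u_ge0 u_cov xj0 sub; apply: le_trans (u_cov x _) _; first by exists j0.
exact: ler_sum_subpred.
Qed.

Lemma fec_number_le1 (j0 : 'I_(size Q)) :
  B \subset nth set0 Q j0 -> fec_number R Q B <= 1.
Proof.
move=> /subsetP B_j0; pose u j : R := (j == j0)%:R.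
have u_ge0 j : 0 <= u j by apply: ler0n.
apply: le_trans (fec_number_le (u := u) _) _.
  split=> // x [j]; rewrite inE => /andP [_ xB].
  have -> : 1 = u j0 by rewrite /u eqxx.
  by apply: ler_sum_term; rewrite // inE B_j0.
by rewrite (bigD1 j0) //= big1 => [|j /negbTE j_j0]; rewrite /u ?eqxx ?addr0 ?j_j0.
Qed.

Lemma fec_number_le_half (P : {pred 'I_(size Q)}) :
  (forall x, (exists j : 'I_(size Q), x \in restricted j) ->
     exists j1 j2, [/\ j1 != j2, j1 \in P, j2 \in P,
                       x \in nth set0 Q j1 & x \in nth set0 Q j2]) ->
  fec_number R Q B <= #|P|%:R / 2.
Proof.
move=> twice; pose u j : R := if j \in P then 2^-1 else 0.
have u_ge0 j : 0 <= u j by rewrite /u; case: ifP => // _; lra.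
apply: le_trans (fec_number_le (u := u) _) _.
  split=> // x x_cov; have [j1 [j2 [j12 j1P j2P xj1 xj2]]] := twice x x_cov.
  have [j /setIP [_ xB]] := x_cov.
  apply: le_trans (ler_sum_terms2 u_ge0 j12 _ _); rewrite ?inE ?xj1 ?xj2 ?xB //.
  by rewrite /u j1P j2P; lra.
by rewrite -big_mkcond /= sumr_const mulr_natl.
Qed.

End FractionalEdgeCover.

Section Width.
Variables (R : realType) (V : finType) (A : seq {set V}).

Lemma fec_number_le_td_width (N : finType) (bag : N -> {set V}) t :
  fec_number R A (bag t) <= td_width R A bag.
Proof. exact: (le_bigmax 0 (fun t => fec_number R A (bag t))). Qed.

Lemma fhw_eq (r : R) (N0 : finType) (e0 : rel N0) (bag0 : N0 -> {set V}) :
  is_tree_decomposition A e0 bag0 -> td_width R A bag0 <= r ->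
  (forall (N : finType) (e : rel N) (bag : N -> {set V}),
     is_tree_decomposition A e bag -> r <= td_width R A bag) ->
  fhw R A = r.
Proof.
move=> td0 width0 r_lb; rewrite /fhw; apply/le_anti/andP; split.
  apply: le_trans width0; apply: ge_inf; last by exists N0, e0, bag0.
  by exists r => _ [N [e [bag [td ->]]]]; apply: r_lb td.
apply: lb_le_inf; first by exists (td_width R A bag0), N0, e0, bag0.
by move=> _ [N [e [bag [td ->]]]]; apply: r_lb td.
Qed.

Lemma two_bag_decomposition (B1 B2 : {set V}) :
  {in A, forall a : {set V}, (a \subset B1) || (a \subset B2)} ->
  is_tree_decomposition A (fun b c : bool => b != c) (fun b => if b then B1 else B2).
Proof.
move=> A_sub; split.
- split=> [|b c|b|b c|].
  + by rewrite card_bool.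
  + by rewrite eq_sym.
  + by rewrite eqxx.
  + by case: b; case: c; rewrite ?connect0 ?connect1.
  + have -> : [set p : bool * bool | p.1 != p.2] = [set (true, false); (false, true)].
      by apply/setP => -[[] []]; rewrite !inE.
    by rewrite cards2 card_bool.
- by move=> a /A_sub /orP [sub1 | sub2]; [exists true | exists false].
- move=> v b c vb vc; case: (eqVneq b c) => [-> | bc]; first exact: connect0.
  by apply: connect1; rewrite bc vb vc.
Qed.

End Width.

Section ComplementQueryExtension.
Variables (R : realType) (V : finType) (A : seq {set V}) (X : 'I_(size A) -> V).
Hypothesis atom_complement : forall j : 'I_(size A), nth set0 A j = [set y | y != X j].
Hypothesis X_inj : injective X.
Hypothesis size_A_ge3 : (3 <= size A)%N.
Variable s : 'S_(size A).

Local Notation K := (size A).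
Local Notation Q := (@mv_component _ A s).
Local Notation atom j := (nth set0 Q j).

Lemma size_mv_component : size Q = K.
Proof. by rewrite size_map size_enum_ord. Qed.

Lemma atom_index_lt (j : 'I_(size Q)) : (j < K)%N.
Proof. exact: (ltn_ord (cast_ord size_mv_component j)). Qed.

Definition missing (j : 'I_(size Q)) : V := X (s (cast_ord size_mv_component j)).

Lemma missing_eq j j' : (missing j == missing j') = (j == j').
Proof.
by rewrite (inj_eq X_inj) (inj_eq (@perm_inj _ s)) (inj_eq (@cast_ord_inj _ _ _)).
Qed.

Lemma nth_mv_component (j : 'I_(size Q)) :
  atom j = [set inr z | z : 'I_K & (z <= j)%N] :|: inl @: [set y | y != missing j].
Proof.
rewrite -atom_complement (nth_map (cast_ord size_mv_component j)) ?size_enum_ord.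
  by rewrite (nth_ord_enum _ (cast_ord size_mv_component j)).
exact: atom_index_lt.
Qed.

Lemma mem_atom_inr (j : 'I_(size Q)) (z : 'I_K) : (inr z \in atom j) = (z <= j)%N.
Proof.
rewrite nth_mv_component inE mem_imset ?inE; last by move=> ? ? [].
by case: (z <= j)%N => //=; apply/negbTE/imsetP => -[].
Qed.

Lemma mem_atom_inl (j : 'I_(size Q)) (x : V) : (inl x \in atom j) = (x != missing j).
Proof.
rewrite nth_mv_component inE mem_imset ?inE; last by move=> ? ? [].
by rewrite orbC; case: (x != missing j) => //=; apply/negbTE/imsetP => -[].
Qed.

(* Atoms are numbered from 0: [penult_atom] and [last_atom] are the paper's
   atoms k-1 and k. *)
Fact first_atom_lt : (0 < size Q)%N. Proof. by rewrite size_mv_component; lia. Qed.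
Fact penult_atom_lt : (K - 2 < size Q)%N. Proof. by rewrite size_mv_component; lia. Qed.
Fact last_atom_lt : (K - 1 < size Q)%N. Proof. by rewrite size_mv_component; lia. Qed.

Definition first_atom : 'I_(size Q) := Ordinal first_atom_lt.
Definition penult_atom : 'I_(size Q) := Ordinal penult_atom_lt.
Definition last_atom : 'I_(size Q) := Ordinal last_atom_lt.

Lemma special_atoms_neq :
  [/\ first_atom != penult_atom, first_atom != last_atom & penult_atom != last_atom].
Proof. by split; apply/eqP => /(congr1 val) /=; lia. Qed.

Definition Z_penult : V + 'I_K := inr (cast_ord size_mv_component penult_atom).

Lemma three_halves_le_fec_number (B : {set V + 'I_K}) :
  Z_penult \in B -> inl (missing penult_atom) \in B -> inl (missing last_atom) \in B ->
  3%:R / 2%:R <= fec_number R Q B.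
Proof.
have [_ _ pen_last] := special_atoms_neq.
move=> ZB penB lastB; apply: fec_number_ge => u u_cov.
have Z_cov : 1 <= u penult_atom + u last_atom.
  rewrite -big_pred2 //; apply: (cover_constraint u_cov (x := Z_penult) (j0 := last_atom)).
    by rewrite inE ZB mem_atom_inr /=; lia.
  move=> j; rewrite inE mem_atom_inr /= => /andP [pen_j _]; apply/orP.
  by rewrite -!(inj_eq val_inj) /=; have := atom_index_lt j; lia.
have X_cov j : inl (missing j) \in B -> 1 <= \sum_(i | i != j) u i.
  move=> jB; pose j' := if j == last_atom then penult_atom else last_atom.
  apply: (cover_constraint u_cov (x := inl (missing j)) (j0 := j')).
    rewrite inE jB mem_atom_inl andbT eq_sym missing_eq.
    by rewrite /j'; case: (eqVneq j last_atom) => [->|j_last]; rewrite ?eqxx // eq_sym.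
  by move=> i; rewrite inE mem_atom_inl eq_sym missing_eq => /andP [].
have pen_cov := X_cov _ penB; have last_cov := X_cov _ lastB.
have sum_pen : \sum_i u i = u penult_atom + \sum_(i | i != penult_atom) u i by apply: bigD1.
have sum_last : \sum_i u i = u last_atom + \sum_(i | i != last_atom) u i by apply: bigD1.
lra.
Qed.

Definition bag_noZ : {set V + 'I_K} :=
  [set v | v != inr (cast_ord size_mv_component last_atom)].
Definition bag_noX : {set V + 'I_K} := [set v | v != inl (missing last_atom)].

Lemma mv_component_decomposition :
  is_tree_decomposition Q (fun b c : bool => b != c)
    (fun b => if b then bag_noZ else bag_noX).
Proof.
apply: two_bag_decomposition => _ /(nthP set0) [n n_lt <-].
pose j := Ordinal n_lt; rewrite -[n]/(nat_of_ord j).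
case: (eqVneq j last_atom) => [-> | j_last]; apply/orP; [right | left].
  by apply/subsetP => -[x|z]; rewrite !inE ?mem_atom_inl.
apply/subsetP => -[x|z]; rewrite !inE ?mem_atom_inr // => z_j.
apply: contraNneq j_last => -[z_last]; apply/eqP/val_inj => /=.
by have := atom_index_lt j; move: z_j; rewrite z_last /=; lia.
Qed.

Lemma fec_number_bag_noX : fec_number R Q bag_noX <= 1.
Proof.
apply: (@fec_number_le1 R _ Q _ last_atom); apply/subsetP => -[x|z]; rewrite !inE.
  by rewrite mem_atom_inl.
by rewrite mem_atom_inr /=; have := ltn_ord z; lia.
Qed.

Lemma fec_number_bag_noZ : fec_number R Q bag_noZ <= 3%:R / 2%:R.
Proof.
have [first_pen first_last pen_last] := special_atoms_neq.
have -> : 3%N = #|[:: first_atom; penult_atom; last_atom]|.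
  by apply/esym/card_uniqP; rewrite /= !inE negb_or first_pen first_last pen_last.
apply: fec_number_le_half => -[x|z] [j /setIP [_]]; rewrite inE => vB.
  case: (eqVneq x (missing first_atom)) => [-> | x_first].
    exists penult_atom, last_atom; rewrite !inE !mem_atom_inl !missing_eq.
    by rewrite pen_last first_pen first_last !eqxx ?orbT.
  case: (eqVneq x (missing penult_atom)) => [-> | x_pen].
    exists first_atom, last_atom; rewrite !inE !mem_atom_inl !missing_eq.
    by rewrite (eq_sym penult_atom) first_pen first_last pen_last !eqxx ?orbT.
  exists first_atom, penult_atom; rewrite !inE !mem_atom_inl.
  by rewrite first_pen x_first x_pen !eqxx ?orbT.
have z_last : z != (K - 1)%N :> nat.
  by apply: contraNneq vB => z_last; apply/eqP; congr (inr _); apply: val_inj.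
exists penult_atom, last_atom; rewrite !inE !mem_atom_inr pen_last !eqxx ?orbT /=.
by split=> //; have := ltn_ord z; lia.
Qed.

Lemma fhw_mv_component : fhw R Q = 3%:R / 2%:R.
Proof.
apply: (fhw_eq mv_component_decomposition) => [|N e bag td].
  apply: bigmax_le => [|[] _]; first lra.
    exact: fec_number_bag_noZ.
  by apply: le_trans fec_number_bag_noX _; lra.
have [first_pen first_last pen_last] := special_atoms_neq.
have [t] : exists t,
    [set Z_penult; inl (missing penult_atom); inl (missing last_atom)] \subset bag t.
  apply: tree_decomposition_helly3 td _ _ _.
  - exists (atom last_atom); first exact: mem_nth.
    by rewrite subUset !sub1set mem_atom_inr mem_atom_inl missing_eq pen_last /=; lia.
  - exists (atom penult_atom); first exact: mem_nth.
    by rewrite subUset !sub1set mem_atom_inr mem_atom_inl missing_eq eq_sym pen_last leqnn.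
  - exists (atom first_atom); first exact: mem_nth.
    rewrite subUset !sub1set !mem_atom_inl !missing_eq.
    by rewrite eq_sym first_pen eq_sym first_last.
rewrite !subUset !sub1set => /andP [/andP [Zt pen_t] last_t].
apply: le_trans (fec_number_le_td_width R Q bag t).
exact: three_halves_le_fec_number.
Qed.

End ComplementQueryExtension.

Lemma size_loomis_whitney k : size (loomis_whitney k) = k.
Proof. by rewrite size_map size_enum_ord. Qed.

Lemma nth_loomis_whitney k (j : 'I_(size (loomis_whitney k))) :
  nth set0 (loomis_whitney k) j = [set y | y != cast_ord (size_loomis_whitney k) j].
Proof.
set i := cast_ord (size_loomis_whitney k) j.
by rewrite (nth_map i) ?size_enum_ord ?(nth_ord_enum _ i) //; apply: ltn_ord i.
Qed.

Theorem mainTheorem9 (R : realType) (k : nat) (hk : (3 <= k)%N) :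
  fhw_mv_extension R (loomis_whitney k) = 3%:R / 2%:R.
Proof.
have fhw_component s : fhw R (@mv_component _ (loomis_whitney k) s) = 3%:R / 2%:R.
  apply: fhw_mv_component (@nth_loomis_whitney k) _ _ s.
    exact: cast_ord_inj.
  by rewrite size_loomis_whitney.
rewrite /fhw_mv_extension (eq_bigr _ (fun s _ => fhw_component s)).
apply/le_anti/andP; split; first by apply: bigmax_le => //; lra.
exact: (le_bigmax 0 (fun=> 3%:R / 2%:R : R) (1 : 'S_(size (loomis_whitney k)))%g).
Qed.
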